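(* Let $L, n, C, F$ be positive integers with $C \le L$. Let $x = (x^{(1)}, \ldots, x^{(L)})$ with each $x^{(\ell)} = (x^{(\ell)}_1,\dots,x^{(\ell)}_n) \in \mathbb{R}^n$, and let $y \in \mathbb{R}^{L \times L \times 2n}$ be its self-Cartesian product, defined by $y_{i,j,k} = x^{(i)}_k$ if $1 \le k \le n$ and $y_{i,j,k} = x^{(j)}_{k-n}$ if $n+1 \le k \le 2n$. Let $\mathbf{W} \in \mathbb{R}^{C \times C \times 2n \times F}$ be a symmetry generating kernel, i.e. $\mathbf{W}_{i,j,k,f} = \mathbf{W}_{j,i,k,f}$ for all $i,j \in \{1,\dots,C\}$, $k \in \{1,\dots,2n\}$, $f\in\{1,\dots,F\}$, and $\mathbf{W}_{i,j,k,f} = \mathbf{W}_{i,j,n+k,f}$ for all $i,j$, all $f$, and all $k \le n$. Let $\mathbf{Z} = \mathbf{W} * y$ be the output of the convolutional layer with kernel $\mathbf{W}$ and input $y$, i.e. $$\mathbf{Z}_{s,t,f} = \sum_{k=1}^{2n} \sum_{i,j=1}^{C} \mathbf{W}_{i,j,k,f}\, y_{s+i,\,t+j,\,k}, \qquad s,t \in \{0,1,\dots,L-C\},\ f \in \{1,\dots,F\}.$$ Then $\mathbf{Z}$ is symmetric in the spatial dimensions: $\mathbf{Z}_{s,t,f} = \mathbf{Z}_{t,s,f}$ for all $s,t,f$.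
   Context: The convolution here is the standard (unbiased, stride one, no padding) cross-correlation used in convolutional neural networks, with $C$ the kernel size, $2n$ the number of input channels and $F$ the number of output channels. *)

From mathcomp Require Import all_boot all_order all_algebra.
Set Implicit Arguments. Unset Strict Implicit. Unset Printing Implicit Defensive.
Import GRing.Theory Num.Theory.
Local Open Scope ring_scope.

(* All indices are 0-based ('I_m = {0,...,m-1}); the paper's 1-based indices
   are shifted by one.  Channel index k : 'I_(n + n): lshift n k' is the
   paper's k'+1 (first copy), rshift n k' is the paper's n+k'+1. *)

Definition self_cart (R : Type) (L n : nat) (x : 'I_L -> 'I_n -> R)
  (i j : 'I_L) (k : 'I_(n + n)) : R :=
  match split k with
  | inl k' => x i k'
  | inr k' => x j k'
  end.

Definition sym_gen_kernel (R : Type) (C n F : nat)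
  (W : 'I_C -> 'I_C -> 'I_(n + n) -> 'I_F -> R) : Prop :=
  (forall i j k f, W i j k f = W j i k f) /\
  (forall i j (k : 'I_n) f, W i j (lshift n k) f = W i j (rshift n k) f).

(* y evaluated at natural-number spatial indices (a, b); 0 outside the grid.
   Under C <= L every index actually used by conv2d is inside the grid. *)
Definition yat (R : nzRingType) (L m : nat) (y : 'I_L -> 'I_L -> 'I_m -> R)
  (a b : nat) (k : 'I_m) : R :=
  match insub a, insub b with
  | Some a', Some b' => y a' b' k
  | _, _ => 0
  end.

Definition conv2d (R : nzRingType) (L C m F : nat)
  (W : 'I_C -> 'I_C -> 'I_m -> 'I_F -> R) (y : 'I_L -> 'I_L -> 'I_m -> R)
  (s t : 'I_(L - C).+1) (f : 'I_F) : R :=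
  \sum_(k < m) \sum_(i < C) \sum_(j < C)
     W i j k f * yat y (s + i) (t + j) k.

From mathcomp Require Import all_boot all_order all_algebra.
Local Open Scope ring_scope.
Set Implicit Arguments.
Unset Strict Implicit.
Unset Printing Implicit Defensive.

(* Exchanging the two halves of the channels is a bijection [sigma] with
   [W_{i,j,sigma k} = W_{j,i,k}] and [y_{a,b,sigma k} = y_{b,a,k}].  Reindexing
   the channel sum of [Z_{s,t}] by [sigma] and exchanging the roles of [i] and
   [j] then turns it into [Z_{t,s}]. *)

Definition swap_halves {n : nat} (k : 'I_(n + n)) : 'I_(n + n) :=
  match split k with
  | inl k' => rshift n k'
  | inr k' => lshift n k'
  end.

Lemma swap_halves_lshift (n : nat) (k : 'I_n) :
  swap_halves (lshift n k) = rshift n k.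
Proof. by rewrite /swap_halves (unsplitK (inl _)). Qed.

Lemma swap_halves_rshift (n : nat) (k : 'I_n) :
  swap_halves (rshift n k) = lshift n k.
Proof. by rewrite /swap_halves (unsplitK (inr _)). Qed.

Lemma swap_halvesK (n : nat) : involutive (@swap_halves n).
Proof.
move=> k; rewrite -[k]splitK; case: split => k' /=.
- by rewrite swap_halves_lshift swap_halves_rshift.
- by rewrite swap_halves_rshift swap_halves_lshift.
Qed.

Lemma self_cart_swap_halves (R : Type) (L n : nat) (x : 'I_L -> 'I_n -> R)
    (i j : 'I_L) (k : 'I_(n + n)) :
  self_cart x i j (swap_halves k) = self_cart x j i k.
Proof.
rewrite /self_cart /swap_halves.
by case: (split k) => k'; rewrite ?(unsplitK (inl _)) ?(unsplitK (inr _)).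
Qed.

Lemma sym_gen_kernel_swap_halves (R : Type) (C n F : nat)
    (W : 'I_C -> 'I_C -> 'I_(n + n) -> 'I_F -> R) :
  sym_gen_kernel W -> forall i j k f, W i j (swap_halves k) f = W j i k f.
Proof.
case=> W_sym W_halves i j k f; rewrite W_sym -[k]splitK; case: split => k' /=.
- by rewrite swap_halves_lshift W_halves.
- by rewrite swap_halves_rshift W_halves.
Qed.

Lemma yat_transpose (R : nzRingType) (L m : nat) (y : 'I_L -> 'I_L -> 'I_m -> R)
    (sigma : 'I_m -> 'I_m) :
  (forall a b k, y a b (sigma k) = y b a k) ->
  forall (a b : nat) k, yat y a b (sigma k) = yat y b a k.
Proof.
by move=> y_sigma a b k; rewrite /yat; case: insub => [a'|]; case: insub.
Qed.

Lemma conv2d_transpose (R : nzRingType) (L C m F : nat)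
    (W : 'I_C -> 'I_C -> 'I_m -> 'I_F -> R) (y : 'I_L -> 'I_L -> 'I_m -> R)
    (sigma : 'I_m -> 'I_m) :
  injective sigma ->
  (forall i j k f, W i j (sigma k) f = W j i k f) ->
  (forall a b k, y a b (sigma k) = y b a k) ->
  forall s t f, conv2d W y s t f = conv2d W y t s f.
Proof.
move=> sigma_inj W_sigma y_sigma s t f.
rewrite /conv2d (reindex_inj sigma_inj); apply: eq_bigr => k _.
rewrite exchange_big; apply: eq_bigr => j _; apply: eq_bigr => i _.
by rewrite W_sigma (yat_transpose y_sigma).
Qed.

Theorem theorem1 (R : realFieldType) (L n C F : nat)
  (hL : (0 < L)%N) (hn : (0 < n)%N) (hC : (0 < C)%N) (hF : (0 < F)%N)
  (hCL : (C <= L)%N)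
  (x : 'I_L -> 'I_n -> R)
  (W : 'I_C -> 'I_C -> 'I_(n + n) -> 'I_F -> R)
  (hW : sym_gen_kernel W) :
  forall (s t : 'I_(L - C).+1) (f : 'I_F),
    conv2d W (self_cart x) s t f = conv2d W (self_cart x) t s f.
Proof.
apply: (conv2d_transpose (sigma := @swap_halves n)).
- exact: inv_inj (@swap_halvesK n).
- exact: sym_gen_kernel_swap_halves.
- exact: self_cart_swap_halves.
Qed.
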